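(* Let $\sigma_0\ge\sigma_1\ge\dots\ge\sigma_{r-1}>0$ with $\sum_{i=0}^{r-1}\sigma_i^2=1$ and $r\le\min(N_1-1,N_2-1)$. Then $$\sigma_0\sigma_1\,\mathbb{I}_{N_1N_2}+\sum_{i=0}^{r-1}\sum_{j=0}^{r-1}\sigma_i\sigma_j\,|i\rangle\langle j|\otimes|i\rangle\langle j|\in\mathrm{SEP}_{N_1\otimes N_2}.$$
   Context: $\mathrm{SEP}_{N_1\otimes N_2}$ is the cone of separable matrices on $\mathbb{C}^{N_1}\otimes\mathbb{C}^{N_2}$, i.e. matrices of the form $\sum_i\lambda_i|x_i\rangle\langle x_i|\otimes|y_i\rangle\langle y_i|$ with $\lambda_i\ge0$. $\{|i\rangle\}$ is the computational basis. *)

From HB Require Import structures.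
From mathcomp Require Import all_boot all_order all_algebra.
From mathcomp Require Export mxtens.
Set Implicit Arguments.
Unset Strict Implicit.
Unset Printing Implicit Defensive.
Import Order.TTheory GRing.Theory Num.Theory.
Local Open Scope ring_scope.

Definition adjmx (C : numClosedFieldType) m n (A : 'M[C]_(m, n)) : 'M[C]_(n, m) :=
  map_mx Num.conj A^T.

Definition ketbra (C : numClosedFieldType) n (x : 'cV[C]_n) : 'M[C]_n :=
  x *m adjmx x.

(* SEP_{N1 (x) N2}: finite nonnegative combinations of |x><x| (x) |y><y|.
   The tensor (Kronecker) product is mathcomp's tensmx ( *t ), with
   index (i1, i2) |-> i1 * N2 + i2, i.e. |i1> (x) |i2>. *)
Definition SEP (C : numClosedFieldType) (N1 N2 : nat) (M : 'M[C]_(N1 * N2)) : Prop :=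
  exists (k : nat) (lam : 'I_k -> C) (x : 'I_k -> 'cV[C]_N1) (y : 'I_k -> 'cV[C]_N2),
    (forall t, 0 <= lam t) /\
    M = \sum_(t < k) lam t *: (ketbra (x t) *t ketbra (y t)).

(* The computational-basis operator |i><j| on C^N (zero if out of range). *)
Definition ketbra_ij (C : numClosedFieldType) (N i j : nat) : 'M[C]_N :=
  \matrix_(a < N, b < N) ((a == i :> nat) && (b == j :> nat))%:R.

From mathcomp Require Import all_boot all_order all_algebra.
From mathcomp Require Import mxtens.
From mathcomp Require Import ring zify.
Import Order.TTheory GRing.Theory Num.Theory.
Set Implicit Arguments.
Unset Strict Implicit.
Unset Printing Implicit Defensive.
Local Open Scope ring_scope.

(* Let x_th = sum_a sqrt(sigma_a) w_th(a) |a> and y_th = sum_b sqrt(sigma_b) conj(w_th(b)) |b>,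
   with independent uniformly random fourth roots of unity w_th(0), ..., w_th(r-1).
   Averaging |x_th><x_th| (x) |y_th><y_th| over th kills every entry <ab|.|cd> except
   those with {a, d} = {b, c}: what survives is |psi><psi|, for psi = sum_i sigma_i |ii>,
   plus the diagonal terms sigma_a sigma_b |ab><ab| with a <> b.  As the sigma's are
   nonincreasing, sigma_a sigma_b <= sigma_0 sigma_1 for a <> b, so the matrix is this
   average plus a diagonal matrix with nonnegative entries. *)

Section Separable.
Variables (C : numClosedFieldType) (N1 N2 : nat).

Lemma SEP0 : @SEP C N1 N2 0.
Proof.
exists 0%N, (fun _ => 0), (fun _ => 0), (fun _ => 0); split; first by case.
by rewrite big_ord0.
Qed.

Lemma SEP_add (A B : 'M[C]_(N1 * N2)) : SEP A -> SEP B -> SEP (A + B).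
Proof.
move=> [k1 [l1 [x1 [y1 [l1_ge0 ->]]]]] [k2 [l2 [x2 [y2 [l2_ge0 ->]]]]].
pose glue T (f1 : 'I_k1 -> T) (f2 : 'I_k2 -> T) t :=
  match split t with inl t => f1 t | inr t => f2 t end.
exists (k1 + k2)%N, (glue _ l1 l2), (glue _ x1 x2), (glue _ y1 y2).
split; first by move=> t; rewrite /glue; case: (split t).
rewrite big_split_ord; congr (_ + _); apply: eq_bigr => t _.
  by rewrite /glue -[lshift _ _]/(unsplit (inl _ t)) unsplitK.
by rewrite /glue -[rshift _ _]/(unsplit (inr _ t)) unsplitK.
Qed.

Lemma SEP_sum (I : finType) (F : I -> 'M[C]_(N1 * N2)) :
  (forall i, SEP (F i)) -> SEP (\sum_i F i).
Proof. by move=> SEP_F; apply: big_ind => //; [exact: SEP0 | exact: SEP_add]. Qed.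

Lemma SEP_scale_tens (c : C) x y :
  0 <= c -> @SEP C N1 N2 (c *: (ketbra x *t ketbra y)).
Proof.
move=> c_ge0; exists 1%N, (fun _ => c), (fun _ => x), (fun _ => y).
by rewrite big_ord1.
Qed.

Lemma ketbra_delta n (i : 'I_n) : ketbra (delta_mx i 0 : 'cV[C]_n) = delta_mx i i.
Proof. by rewrite /ketbra /adjmx trmx_delta map_delta_mx mul_delta_mx. Qed.

Lemma delta_mx_tens (a c : 'I_N1) (b d : 'I_N2) :
  delta_mx (mxtens_index (a, b)) (mxtens_index (c, d))
  = delta_mx a c *t delta_mx b d :> 'M[C]_(N1 * N2).
Proof.
apply/matrixP => p q.
case: (mxtens_indexP p) => a' b'; case: (mxtens_indexP q) => c' d'.
rewrite tensmxE !mxE !(inj_eq (can_inj (@mxtens_indexK _ _))) !xpair_eqE.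
by rewrite -!natrM mulnb andbACA.
Qed.

Lemma SEP_diag_mx (d : 'rV[C]_(N1 * N2)) :
  (forall p, 0 <= d 0 p) -> SEP (diag_mx d).
Proof.
move=> d_ge0; rewrite diag_mx_sum_delta; apply: SEP_sum => p.
case: (mxtens_indexP p) => a b.
by rewrite delta_mx_tens -!ketbra_delta; apply: SEP_scale_tens.
Qed.

End Separable.

Lemma sum_prim_root_expr (R : idomainType) n (z : R) e :
  n.-primitive_root z ->
  \sum_(u < n) z ^+ (u * e) = if (n %| e)%N then n%:R else 0.
Proof.
move=> prim_z; under eq_bigr => u _ do rewrite mulnC exprM.
rewrite (prim_order_dvd prim_z); case: eqP => [-> | /eqP ze_neq1].
  by under eq_bigr => u _ do rewrite expr1n; rewrite sumr_const card_ord.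
have : (z ^+ e - 1) * \sum_(u < n) (z ^+ e) ^+ u = 0.
  by rewrite -subrX1 -exprM mulnC exprM (prim_expr_order prim_z) expr1n subrr.
by move/eqP; rewrite mulf_eq0 subr_eq0 (negbTE ze_neq1) => /eqP.
Qed.

Lemma prim4_rootCi (C : numClosedFieldType) : 4.-primitive_root ('i : C).
Proof.
have N1_neq1 : (-1 : C) != 1 by rewrite lt_eqF // (lt_trans (ltrN10 _) ltr01).
apply/andP; split => //; apply/forallP => -[[|[|[|[|//]]]] //= _];
  rewrite unity_rootE ?eqbF_neg ?eqb_id.
- by apply: contraNneq N1_neq1 => i1; rewrite -sqrCi -[X in X ^+ 2]expr1 i1 expr1n.
- by rewrite sqrCi.
- apply: contraNneq N1_neq1; rewrite exprS sqrCi mulrN1 => /eqP.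
  by rewrite eqr_oppLR => /eqP i_N1; rewrite -sqrCi i_N1 sqrrN expr1n.
- by rewrite (exprM _ 2 2) sqrCi sqrrN expr1n.
Qed.

Lemma prodr_if0 (R : comPzRingType) (I : finType) (P : pred I) (x : R) :
  \prod_i (if P i then x else 0) = if [forall i, P i] then x ^+ #|I| else 0.
Proof.
case: ifP => [/forallP P_all | /negbT].
  by rewrite -prodr_const; apply: eq_bigr => i _; rewrite P_all.
rewrite negb_forall => /existsP [i /negbTE Pi_false].
by rewrite (bigD1 i) //= Pi_false mul0r.
Qed.

Lemma dvd4_count (a b c d : bool) :
  (4 %| a + d + (b + c) * 3)%N = (a + d == b + c)%N.
Proof. by case: a; case: b; case: c; case: d. Qed.

Section Phases.
Variables (C : numClosedFieldType) (r : nat).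

(* w_th(a) = 'i ^+ th a for a < r and 1 otherwise; the product form makes the
   average over th factor over t. *)
Definition phase (th : {ffun 'I_r -> 'I_4}) (a : nat) : C :=
  \prod_(t < r) 'i ^+ (th t * (a == t)).

Lemma conj_phase th a : (phase th a)^* = \prod_(t < r) 'i ^+ (th t * (a == t) * 3).
Proof.
rewrite rmorph_prod; apply: eq_bigr => t _.
by rewrite rmorphXn /= conjCi -mulrN1 -sqrCi -exprS -exprM mulnC.
Qed.

Lemma phase_average (a b c d : nat) :
  \sum_th phase th a * (phase th b)^* * (phase th c)^* * phase th d
  = if [forall t : 'I_r, (a == t) + (d == t) == (b == t) + (c == t)]%N
    then 4 ^+ r else 0.
Proof.
pose e (t : 'I_r) := ((a == t) + (d == t) + ((b == t) + (c == t)) * 3)%N.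
transitivity (\sum_(th : {ffun 'I_r -> 'I_4}) \prod_t ('i : C) ^+ (th t * e t)).
  apply: eq_bigr => th _; rewrite !conj_phase -!big_split /=.
  by apply: eq_bigr => t _; rewrite -!exprD /e; congr (_ ^+ _); lia.
rewrite -(bigA_distr_bigA (fun t (u : 'I_4) => ('i : C) ^+ (u * e t))) /=.
under eq_bigr => t _ do rewrite (sum_prim_root_expr _ (prim4_rootCi C)) /e dvd4_count.
by rewrite prodr_if0 card_ord.
Qed.

End Phases.

Arguments phase {C r}.

Lemma forall_count_pairsE r (a b c d : nat) :
  (a < r)%N -> (b < r)%N -> (c < r)%N -> (d < r)%N ->
  [forall t : 'I_r, (a == t) + (d == t) == (b == t) + (c == t)]%N
  = (a == b) && (c == d) || (a == c) && (b == d).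
Proof.
move=> lt_ar lt_br lt_cr lt_dr; apply/forallP/idP => [count_eq | ].
  move: (count_eq (Ordinal lt_ar)) (count_eq (Ordinal lt_dr)) => /= /eqP ? /eqP ?.
  apply/orP; lia.
by case/orP => /andP [/eqP -> /eqP ->] t //; rewrite addnC.
Qed.

Section Twirl.
Variables (C : numClosedFieldType) (N1 N2 r : nat) (s : nat -> C).
Hypothesis s_real : forall i, (s i)^* = s i.
Hypothesis s_vanish : forall i, (r <= i)%N -> s i = 0.

Definition twirl_vecl (th : {ffun 'I_r -> 'I_4}) : 'cV[C]_N1 :=
  \col_(a < N1) (s a * phase th a).
Definition twirl_vecr (th : {ffun 'I_r -> 'I_4}) : 'cV[C]_N2 :=
  \col_(b < N2) (s b * (phase th b)^*).

Definition twirl : 'M[C]_(N1 * N2) :=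
  \sum_(th : {ffun 'I_r -> 'I_4})
    4 ^- r *: (ketbra (twirl_vecl th) *t ketbra (twirl_vecr th)).

Lemma SEP_twirl : SEP twirl.
Proof.
apply: SEP_sum => th; apply: SEP_scale_tens.
by rewrite invr_ge0 exprn_ge0 ?ler0n.
Qed.

Lemma twirl_entry (a c : 'I_N1) (b d : 'I_N2) :
  twirl (mxtens_index (a, b)) (mxtens_index (c, d))
  = s a * s b * s c * s d *
    ((a == b :> nat) && (c == d :> nat) || (a == c :> nat) && (b == d :> nat))%:R.
Proof.
have -> : twirl (mxtens_index (a, b)) (mxtens_index (c, d)) =
    4 ^- r * (s a * s b * s c * s d) *
    \sum_(th : {ffun 'I_r -> 'I_4})
      phase th a * (phase th b)^* * (phase th c)^* * phase th d.
  rewrite summxE mulr_sumr; apply: eq_bigr => th _.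
  rewrite mxE tensmxE /ketbra /adjmx !mxE !big_ord1 !mxE !rmorphM /= !s_real conjCK.
  ring.
rewrite phase_average.
have [/and4P [lt_ar lt_br lt_cr lt_dr] | ] :=
  boolP [&& (a < r)%N, (b < r)%N, (c < r)%N & (d < r)%N].
  rewrite forall_count_pairsE //; case: ifP => _; last by rewrite !mulr0.
  by rewrite mulrAC mulVf ?mul1r ?mulr1 // expf_neq0 // pnatr_eq0.
rewrite !negb_and -!leqNgt => /or4P [] /s_vanish ->;
  by rewrite ?(mulr0, mul0r).
Qed.

End Twirl.

Lemma le_mul_top_two (R : numDomainType) (sg : nat -> R) :
  (forall i, 0 <= sg i) -> (forall i j, (i <= j)%N -> sg j <= sg i) ->
  forall a b, a != b -> sg a * sg b <= sg 0%N * sg 1%N.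
Proof.
move=> sg_ge0 sg_anti a b neq_ab.
wlog lt_ab : a b neq_ab / (a < b)%N.
  move=> wlog_ab; have [lt_ab | lt_ba] : (a < b)%N \/ (b < a)%N by lia.
    exact: wlog_ab.
  by rewrite mulrC wlog_ab // eq_sym.
by apply: ler_pM => //; apply: sg_anti; lia.
Qed.

Section SchmidtSum.
Variables (C : numClosedFieldType) (N1 N2 r : nat) (sg : nat -> C).
Hypothesis sg_vanish : forall i, (r <= i)%N -> sg i = 0.

Lemma sum_ord_delta (a : nat) (F : nat -> C) :
  \sum_(i < r) (a == i :> nat)%:R * (sg i * F i) = sg a * F a.
Proof.
case: (ltnP a r) => [lt_ar | /sg_vanish sg_a0].
  rewrite (bigD1 (Ordinal lt_ar)) //= eqxx mul1r big1 ?addr0 // => i.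
  by rewrite -val_eqE eq_sym => /negbTE /= ->; rewrite mul0r.
rewrite sg_a0 mul0r big1 // => i _; case: eqP => [<- | _]; last by rewrite mul0r.
by rewrite sg_a0 mul0r mulr0.
Qed.

Lemma sum_ketbra_ij_tens_entry (a c : 'I_N1) (b d : 'I_N2) :
  (\sum_(i < r) \sum_(j < r)
     (sg i * sg j) *: (ketbra_ij C N1 i j *t ketbra_ij C N2 i j))
    (mxtens_index (a, b)) (mxtens_index (c, d))
  = sg a * sg c * ((a == b :> nat) && (c == d :> nat))%:R.
Proof.
transitivity (\sum_(i < r) (a == i :> nat)%:R * (sg i * ((b == i :> nat)%:R *
    \sum_(j < r) (c == j :> nat)%:R * (sg j * (d == j :> nat)%:R)))).
  rewrite summxE; apply: eq_bigr => i _; rewrite summxE !mulr_sumr.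
  apply: eq_bigr => j _; rewrite mxE tensmxE !mxE.
  by case: (a == i :> nat); case: (b == i :> nat); case: (c == j :> nat);
    case: (d == j :> nat); rewrite /= ?(mul0r, mulr0, mul1r, mulr1) // mulrC.
rewrite (sum_ord_delta c (fun j => (d == j :> nat)%:R)).
rewrite (sum_ord_delta a (fun i => (b == i :> nat)%:R * (sg c * (d == c :> nat)%:R))).
by rewrite -mulnb natrM [b == a :> nat]eq_sym [d == c :> nat]eq_sym; ring.
Qed.

End SchmidtSum.

Lemma pair_indicator_split (R : comPzRingType) (s : nat -> R) (a b c d : nat) :
  s a * s b * s c * s d * ((a == b) && (c == d) || (a == c) && (b == d))%:R
  = s a ^+ 2 * s c ^+ 2 * ((a == b) && (c == d))%:R
    + (a != b)%:R * (s a ^+ 2 * s b ^+ 2) * ((a == c) && (b == d))%:R.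
Proof.
have [<- | _] := eqVneq a b; rewrite /= ?mul0r ?mul1r ?addr0 ?add0r.
  case: (eqVneq c d) => [<- | neq_cd] /=; first by rewrite ?orbT; ring.
  by case: (eqVneq a c) neq_cd => [<- /negbTE-> | _ _]; rewrite /= ?mulr0.
by case: (eqVneq a c) => [<- | _]; case: (eqVneq b d) => [<- | _] /=;
  rewrite ?mulr0 //; ring.
Qed.

Theorem lemma6 (C : numClosedFieldType) (N1 N2 r : nat) (sigma : nat -> C)
  (Hpos : forall i, (i < r)%N -> 0 < sigma i)
  (Hdec : forall i j, (i <= j)%N -> (j < r)%N -> sigma j <= sigma i)
  (Hzero : forall i, (r <= i)%N -> sigma i = 0)
  (Hnorm : \sum_(i < r) sigma i ^+ 2 = 1)
  (Hr1 : (r <= N1.-1)%N) (Hr2 : (r <= N2.-1)%N) :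
  @SEP C N1 N2
    ((sigma 0%N * sigma 1%N) *: (1%:M : 'M[C]_(N1 * N2))
     + \sum_(i < r) \sum_(j < r)
         (sigma i * sigma j) *: (ketbra_ij C N1 i j *t ketbra_ij C N2 i j)).
Proof.
have sigma_ge0 i : 0 <= sigma i.
  by case: (ltnP i r) => [/Hpos/ltW | /Hzero ->].
have sigma_anti i j : (i <= j)%N -> sigma j <= sigma i.
  by case: (ltnP j r) => [lt_jr le_ij | /Hzero -> _]; [exact: Hdec | ].
pose s i := sqrtC (sigma i).
have s_real i : (s i)^* = s i by rewrite geC0_conj ?sqrtC_ge0.
have s_vanish i : (r <= i)%N -> s i = 0.
  by move=> /Hzero; rewrite /s => ->; rewrite sqrtC0.
pose gap (a b : nat) := sigma 0%N * sigma 1%N - (a != b)%:R * (sigma a * sigma b).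
pose D : 'rV[C]_(N1 * N2) := \row_p gap (mxtens_unindex p).1 (mxtens_unindex p).2.
suff -> : (sigma 0%N * sigma 1%N) *: (1%:M : 'M[C]_(N1 * N2))
   + \sum_(i < r) \sum_(j < r)
       (sigma i * sigma j) *: (ketbra_ij C N1 i j *t ketbra_ij C N2 i j)
   = twirl N1 N2 r s + diag_mx D.
  apply: SEP_add; first exact: SEP_twirl.
  apply: SEP_diag_mx => p; rewrite mxE /gap subr_ge0.
  case: eqP => [_ | /eqP]; first by rewrite mul0r mulr_ge0.
  by rewrite mul1r; apply: le_mul_top_two.
apply/matrixP => p q; case: (mxtens_indexP p) => a b; case: (mxtens_indexP q) => c d.
rewrite !mxE sum_ketbra_ij_tens_entry // twirl_entry // pair_indicator_split.
rewrite !(inj_eq (can_inj (@mxtens_indexK _ _))) xpair_eqE mxtens_indexK /= /gap.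
rewrite !sqrtCK; ring.
Qed.
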